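(* In the setting described in the context, $\frac{qK^{-1}A-q^{-1}AK^{-1}}{q-q^{-1}}=aI$, $\frac{qBK^{-1}-q^{-1}K^{-1}B}{q-q^{-1}}=bI$, $\frac{qKA^*-q^{-1}A^*K}{q-q^{-1}}=a^*I$, $\frac{qB^*K-q^{-1}KB^*}{q-q^{-1}}=b^*I$.
   Context: $\mathbb K$ is an algebraically closed field, $q\in\mathbb K$ nonzero and not a root of unity, $V$ a nonzero finite-dimensional $\mathbb K$-vector space. A tridiagonal pair on $V$ is an ordered pair $A,A^*$ of linear maps $V\to V$ such that: (i) each of $A,A^*$ is diagonalizable; (ii) there is an ordering $V_0,\dots,V_d$ of the eigenspaces of $A$ with $A^*V_i\subseteq V_{i-1}+V_i+V_{i+1}$ ($V_{-1}=V_{d+1}=0$); (iii) there is an ordering $V^*_0,\dots,V^*_\delta$ of the eigenspaces of $A^*$ with $AV^*_i\subseteq V^*_{i-1}+V^*_i+V^*_{i+1}$ ($V^*_{-1}=V^*_{\delta+1}=0$); (iv) no subspace $W\ne0,V$ satisfies $AW\subseteq W$, $A^*W\subseteq W$. It is known $d=\delta$; orderings as in (ii),(iii) are called standard. Setting: $A,A^*$ is a tridiagonal pair on $V$; $V_0,\dots,V_d$ (resp. $V^*_0,\dots,V^*_d$) is a standard ordering of the eigenspaces of $A$ (resp. $A^*$); the eigenvalue of $A$ on $V_i$ is $aq^{2i-d}$ and that of $A^*$ on $V^*_i$ is $a^*q^{d-2i}$ for some nonzero $a,a^*\in\mathbb K$; $b,b^*\in\mathbb K$ are nonzero. For $0\le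 i\le d$, each of the following three families of subspaces forms a decomposition of $V$ (nonzero subspaces, direct sum equal to $V$): $(V^*_0+\cdots+V^*_i)\cap(V_0+\cdots+V_{d-i})$; $(V^*_{d-i}+\cdots+V^*_d)\cap(V_i+\cdots+V_d)$; $(V^*_0+\cdots+V^*_i)\cap(V_i+\cdots+V_d)$. $B$ is the linear map acting as $bq^{2i-d}I$ on $(V^*_0+\cdots+V^*_i)\cap(V_0+\cdots+V_{d-i})$; $B^*$ acts as $b^*q^{d-2i}I$ on $(V^*_{d-i}+\cdots+V^*_d)\cap(V_i+\cdots+V_d)$; $K$ acts as $q^{2i-d}I$ on $(V^*_0+\cdots+V^*_i)\cap(V_i+\cdots+V_d)$ (for each $0\le i\le d$). *)

From HB Require Import structures.
From mathcomp Require Import all_boot all_order all_algebra.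
Set Implicit Arguments. Unset Strict Implicit. Unset Printing Implicit Defensive.
Import Order.TTheory GRing.Theory Num.Theory.
Local Open Scope ring_scope.

Definition leigenspace (K : fieldType) (V : vectType K) (A : 'End(V)) (th : K)
  : {vspace V} := lker (A - th *: \1%VF).
Definition leigenvalue (K : fieldType) (V : vectType K) (A : 'End(V)) (th : K) : bool :=
  leigenspace A th != 0%VS.

Definition diagonalizable (K : fieldType) (V : vectType K) (A : 'End(V)) : Prop :=
  exists s : seq K, (\sum_(x <- s) leigenspace A x)%VS = fullv.

Definition eigen_ordering (K : fieldType) (V : vectType K) (A : 'End(V))
    (d : nat) (Vs : nat -> {vspace V}) : Prop :=
  [/\ (forall i, (i <= d)%N -> exists th, leigenvalue A th /\ Vs i = leigenspace A th),
      (forall th, leigenvalue A th -> exists2 i, (i <= d)%N & Vs i = leigenspace A th)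
    & (forall i j, (i <= d)%N -> (j <= d)%N -> Vs i = Vs j -> i = j)].

Definition tridiag_cond (K : fieldType) (V : vectType K) (f : 'End(V))
    (d : nat) (Vs : nat -> {vspace V}) : Prop :=
  forall i, (i <= d)%N ->
    (f @: Vs i <= (if i is j.+1 then Vs j else 0) + Vs i
                   + (if (i < d)%N then Vs i.+1 else 0))%VS.

Definition standard_ordering (K : fieldType) (V : vectType K) (A Astar : 'End(V))
    (d : nat) (Vs : nat -> {vspace V}) : Prop :=
  eigen_ordering A d Vs /\ tridiag_cond Astar d Vs.

Definition tridiagonal_pair (K : fieldType) (V : vectType K) (A As : 'End(V)) : Prop :=
  [/\ (0 < \dim (fullv : {vspace V}))%N,
      diagonalizable A /\ diagonalizable As,
      exists d (Vs : nat -> {vspace V}), standard_ordering A As d Vs,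
      exists delta (Vss : nat -> {vspace V}), standard_ordering As A delta Vss
    & forall W : {vspace V}, (A @: W <= W)%VS -> (As @: W <= W)%VS ->
        W = 0%VS \/ W = fullv].

Definition decomposition (K : fieldType) (V : vectType K) (d : nat)
    (U : nat -> {vspace V}) : Prop :=
  [/\ (forall i, (i <= d)%N -> U i != 0%VS),
      directv (\sum_(i < d.+1) U i)
    & (\sum_(i < d.+1) U i)%VS = fullv].

(* Each identity has the form [qcomm f g = c *: \1] and is checked on one of the
   three decompositions U_0, ..., U_d: f acts on U_i as a scalar ga_i, and g - th_i
   maps U_i into the (q^-2 ga_i)-eigenspace of f, where th_i ga_i = c
   ([qcomm_eq_scalar]).  Let e_i = q^(2i-d) and U_i be the decomposition defining K.
   Then A - a e_i kills V_i and, A being tridiagonal on the V*_j, raises U_i into U_(i+1);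
   symmetrically A* - a* / e_i lowers U_i into U_(i-1).  For B, the first identity
   makes K^-1 - 1/e_j raise V_j into V_(j+1) ([qcomm_raise_eigen]), while
   V*_0 + ... + V*_i = U_0 + ... + U_i lets K^-1 - 1/e_i lower V*_0 + ... + V*_i;
   together K^-1 - 1/e_i lowers the decomposition of B.  B* is dual, using the
   third identity. *)

From HB Require Import structures.
From mathcomp Require Import all_boot all_order all_algebra.
From mathcomp Require Import ring zify.
Import Order.TTheory GRing.Theory Num.Theory.
Local Open Scope ring_scope.
Set Implicit Arguments.
Unset Strict Implicit.

Section SubspaceSums.
Variables (K : fieldType) (V : vectType K).
Implicit Types (X Y : {vspace V}) (f : 'End(V)).

Lemma shift_lfunE f c v : (f - c *: \1%VF) v = f v - c *: v.
Proof. by rewrite add_lfunE opp_lfunE scale_lfunE id_lfunE. Qed.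

Lemma mem_leigenspace f c v : (v \in leigenspace f c) = (f v == c *: v).
Proof. by rewrite memv_ker shift_lfunE subr_eq0. Qed.

Lemma subv_leigenspace f c X :
  (forall v, v \in X -> f v = c *: v) -> (X <= leigenspace f c)%VS.
Proof. by move=> fX; apply/subvP => v /fX fv; rewrite mem_leigenspace fv. Qed.

Lemma limg_shift_sub f c X Y :
  (X <= Y)%VS -> ((f - c *: \1%VF) @: X <= Y)%VS = (f @: X <= Y)%VS.
Proof.
move=> /subvP XY; apply/subvP/subvP => fXY _ /memv_imgP[v Xv ->].
  have := fXY _ (memv_img (f - c *: \1%VF) Xv); rewrite shift_lfunE => fcv.
  by rewrite -[f v](subrK (c *: v)); exact: memvD fcv (memvZ _ (XY _ Xv)).
by rewrite shift_lfunE; exact: memvB (fXY _ (memv_img f Xv)) (memvZ _ (XY _ Xv)).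
Qed.

Lemma limg_shift_subleigenspace f c d X :
  (X <= leigenspace f c)%VS -> ((f - d *: \1%VF) @: X <= X)%VS.
Proof.
move=> /subvP Xc; apply/subvP => _ /memv_imgP[v Xv ->].
by move/Xc: (Xv); rewrite mem_leigenspace shift_lfunE => /eqP->; rewrite -scalerBl; exact: memvZ.
Qed.

Lemma addv_full_capv0 X1 X2 Y1 Y2 :
  (X1 <= Y1)%VS -> (X2 <= Y2)%VS -> (X1 + X2)%VS = fullv -> (Y1 :&: Y2 = 0)%VS ->
  (Y1 <= X1)%VS.
Proof.
move=> /subvP X1Y1 /subvP X2Y2 full Y12; apply/subvP => v Y1v.
have /memv_addP[x1 X1x1 [x2 X2x2 def_v]] : v \in (X1 + X2)%VS by rewrite full memvf.
suff x2_0 : x2 = 0 by rewrite def_v x2_0 addr0.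
apply/eqP; rewrite -memv0 -Y12 memv_cap X2Y2 // andbT.
by rewrite -[x2](addKr x1) -def_v addrC; exact: memvB Y1v (X1Y1 _ X1x1).
Qed.

Section SeqSums.
Variable I : eqType.
Implicit Type W : I -> {vspace V}.

Lemma sumv_sup_seq W (r : seq I) (P : pred I) i :
  i \in r -> P i -> (W i <= \sum_(j <- r | P j) W j)%VS.
Proof. by move=> ri Pi; rewrite (big_rem i) //= Pi addvSl. Qed.

Lemma subv_sum_seqP W (r : seq I) (P : pred I) X :
  reflect (forall i, i \in r -> P i -> (W i <= X)%VS)
          (\sum_(i <- r | P i) W i <= X)%VS.
Proof.
apply: (iffP idP) => [rX i ri Pi | WX]; first exact: subv_trans (sumv_sup_seq _ ri Pi) rX.
rewrite big_seq_cond; apply: (big_ind (fun Y => Y <= X)%VS) => [|Y Z|i].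
- exact: sub0v.
- by move=> YX ZX; rewrite subv_add YX.
- by case/andP; apply: WX.
Qed.

Lemma sumv_sub_seq W (r s : seq I) (P : pred I) :
  (forall i, i \in r -> P i -> i \in s) ->
  (\sum_(i <- r | P i) W i <= \sum_(i <- s) W i)%VS.
Proof. by move=> rs; apply/subv_sum_seqP => i ri Pi; apply: sumv_sup_seq; rewrite ?rs. Qed.

Lemma limg_eigen_sum_shift W (r : seq I) f (th : I -> K) k :
  (forall i, i \in r -> (W i <= leigenspace f (th i))%VS) ->
  ((f - th k *: \1%VF) @: (\sum_(i <- r) W i) <= \sum_(i <- r | i != k) W i)%VS.
Proof.
move=> Weig; rewrite limg_sum; apply/subv_sum_seqP => i ri _.
have [<- | ik] := eqVneq i k.
  by move/Weig: ri; rewrite /leigenspace lkerE => /eqP->; apply: sub0v.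
exact: subv_trans (limg_shift_subleigenspace _ (Weig i ri)) (sumv_sup_seq _ ri ik).
Qed.

Lemma limg_sum_shift_sub W (r : seq I) f (ga : I -> K) c X :
  (forall i, i \in r -> (W i <= X)%VS) ->
  (forall i, i \in r -> ((f - ga i *: \1%VF) @: W i <= X)%VS) ->
  ((f - c *: \1%VF) @: (\sum_(i <- r) W i) <= X)%VS.
Proof.
move=> WX fWX; rewrite limg_shift_sub; last by apply/subv_sum_seqP => i ri _; apply: WX.
by rewrite limg_sum; apply/subv_sum_seqP => i ri _; rewrite -(limg_shift_sub _ (ga i)) ?WX ?fWX.
Qed.

End SeqSums.

Lemma sumv_ord_nat (W : nat -> {vspace V}) n :
  (\sum_(j < n) W j)%VS = (\sum_(0 <= j < n) W j)%VS.
Proof. by rewrite big_mkord. Qed.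

Lemma sumv_nat_sub (W : nat -> {vspace V}) m n m' n' :
  (m' <= m)%N -> (n <= n')%N ->
  (\sum_(m <= j < n) W j <= \sum_(m' <= j < n') W j)%VS.
Proof.
move=> m'm nn'; apply: sumv_sub_seq => j; rewrite !mem_index_iota => /andP[mj jn] _.
by rewrite (leq_trans m'm mj) (leq_trans jn nn').
Qed.

(* [W d.+1] is not constrained by [tridiag_cond], hence the [minn]. *)
Lemma limg_tridiag_sum f d (W : nat -> {vspace V}) m n :
  tridiag_cond f d W -> (n <= d.+1)%N ->
  (f @: (\sum_(m <= j < n) W j) <= \sum_(m.-1 <= j < minn n.+1 d.+1) W j)%VS.
Proof.
move=> trf nd; rewrite limg_sum; apply/subv_sum_seqP => j; rewrite mem_index_iota.
move=> /andP[mj jn] _; apply: subv_trans (trf j _) _; first by lia.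
have sup k : (m.-1 <= k < minn n.+1 d.+1)%N ->
    (W k <= \sum_(m.-1 <= j < minn n.+1 d.+1) W j)%VS.
  by move=> hk; apply: sumv_sup_seq; rewrite ?mem_index_iota.
rewrite !subv_add sup ?andbT; last by lia.
apply/andP; split; first by case: j mj jn => [|j] * //; [apply: sub0v | apply: sup; lia].
by case: ifP => jd; [apply: sup; lia | apply: sub0v].
Qed.

End SubspaceSums.

Section Flags.
Variables (K : fieldType) (V : vectType K) (d : nat) (P Q : nat -> {vspace V}).
Hypothesis P_homo : forall k l, (k <= l)%N -> (P k <= P l)%VS.
Hypothesis Q_homo : forall k l, (k <= l)%N -> (Q l <= Q k)%VS.
Hypothesis PQ_direct : directv (\sum_(i < d.+1) (P i :&: Q i)).
Hypothesis PQ_full : (\sum_(i < d.+1) (P i :&: Q i))%VS = fullv.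

Local Notation U i := (P i :&: Q i)%VS.

Lemma flag_capv0 i : (i < d)%N -> (P i :&: Q i.+1 = 0)%VS.
Proof.
move=> lt_id; have lt_i : (i < d.+1)%N by apply: leqW.
have lt_i1 : (i.+1 < d.+1)%N by [].
move/directv_sumP: PQ_direct => /(_ (Ordinal lt_i) isT) /= U_i_direct.
apply/eqP; rewrite -subv0 -U_i_direct subv_cap capvS ?Q_homo //=.
apply: (sumv_sup (Ordinal lt_i1)); first by rewrite -val_eqE /= gtn_eqF.
exact: capvS (P_homo (leqnSn i)) (subvv _).
Qed.

Lemma sumv_flag_split i : (i <= d)%N ->
  (\sum_(0 <= j < i) U j + \sum_(i <= j < d.+1) U j)%VS = fullv.
Proof. by move=> le_id; rewrite -big_cat_nat ?big_mkord // ltnW. Qed.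

Lemma flag_lo_sumv i : (i <= d)%N -> (P i <= \sum_(0 <= j < i.+1) U j)%VS.
Proof.
rewrite leq_eqVlt => /orP[/eqP-> | lt_id]; first by rewrite big_mkord PQ_full subvf.
apply: (addv_full_capv0 _ _ (sumv_flag_split lt_id) (flag_capv0 lt_id)).
  apply/subv_sum_seqP => j; rewrite mem_index_iota ltnS => /andP[_ le_ji] _.
  exact: subv_trans (capvSl _ _) (P_homo le_ji).
apply/subv_sum_seqP => j; rewrite mem_index_iota => /andP[le_ij _] _.
exact: subv_trans (capvSr _ _) (Q_homo le_ij).
Qed.

Lemma flag_hi_sumv i : (i <= d)%N -> (Q i <= \sum_(i <= j < d.+1) U j)%VS.
Proof.
case: i => [|i lt_id]; first by rewrite big_mkord PQ_full subvf.
have QP0 : (Q i.+1 :&: P i = 0)%VS by rewrite capvC flag_capv0.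
have full : (\sum_(i.+1 <= j < d.+1) U j + \sum_(0 <= j < i.+1) U j)%VS = fullv.
  by rewrite addvC sumv_flag_split.
apply: (addv_full_capv0 _ _ full QP0).
  apply/subv_sum_seqP => j; rewrite mem_index_iota => /andP[le_ij _] _.
  exact: subv_trans (capvSr _ _) (Q_homo le_ij).
apply/subv_sum_seqP => j; rewrite mem_index_iota ltnS => /andP[_ le_ji] _.
exact: subv_trans (capvSl _ _) (P_homo le_ji).
Qed.

Variables (f : 'End(V)) (ga : nat -> K).
Hypothesis U_eigen : forall j, (j <= d)%N -> (U j <= leigenspace f (ga j))%VS.

Lemma limg_flag_lo i : (i <= d)%N ->
  ((f - ga i *: \1%VF) @: P i <= \sum_(0 <= j < i) U j)%VS.
Proof.
move=> le_id; apply: subv_trans (limgS _ (flag_lo_sumv le_id)) _.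
apply: subv_trans (limg_eigen_sum_shift i _) _ => [j|].
  by rewrite mem_index_iota => /andP[_ lt_ji]; apply: U_eigen; lia.
by apply: sumv_sub_seq => j; rewrite !mem_index_iota => lt_ji ij; lia.
Qed.

Lemma limg_flag_hi i : (i <= d)%N ->
  ((f - ga i *: \1%VF) @: Q i <= \sum_(i.+1 <= j < d.+1) U j)%VS.
Proof.
move=> le_id; apply: subv_trans (limgS _ (flag_hi_sumv le_id)) _.
apply: subv_trans (limg_eigen_sum_shift i _) _ => [j|].
  by rewrite mem_index_iota => /andP[_ lt_jd]; apply: U_eigen.
by apply: sumv_sub_seq => j; rewrite !mem_index_iota => lt_ji ij; lia.
Qed.

End Flags.

Section QCommutator.
Variables (K : fieldType) (V : vectType K) (q : K).
Hypothesis q_neq0 : q != 0.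
Hypothesis q2_neq1 : q ^+ 2 != 1.
Implicit Types (f g : 'End(V)).

Definition qcomm f g : 'End(V) :=
  ((q - q^-1)^-1 *: (q *: (f \o g) - q^-1 *: (g \o f)))%VF.

Let q_subV_neq0 : q - q^-1 != 0.
Proof.
apply: contra q2_neq1; rewrite subr_eq0 => /eqP qVq.
by rewrite expr2 {1}qVq mulVf.
Qed.

Lemma qcomm_eq_scalar d (U : nat -> {vspace V}) f g (ga th : nat -> K) c :
  (\sum_(i < d.+1) U i)%VS = fullv ->
  (forall i, (i <= d)%N -> (U i <= leigenspace f (ga i))%VS) ->
  (forall i, (i <= d)%N ->
     ((g - th i *: \1%VF) @: U i <= leigenspace f (q ^- 2 * ga i))%VS) ->
  (forall i, (i <= d)%N -> th i * ga i = c) ->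
  qcomm f g = c *: \1%VF.
Proof.
move=> full U_eig gU thga; apply/lfunP => v.
have /memv_sumP[vs Uvs ->] : v \in (\sum_(i < d.+1) U i)%VS by rewrite full memvf.
rewrite !raddf_sum; apply: eq_bigr => -[i /= lt_id] _.
set u := vs _; have Uu : u \in U i := Uvs _ isT.
move/subvP/(_ u Uu): (U_eig i lt_id); rewrite mem_leigenspace => /eqP fu.
set w := g u - th i *: u.
have /(subvP (gU i lt_id)) : w \in ((g - th i *: \1%VF) @: U i)%VS.
  by rewrite /w -shift_lfunE memv_img.
rewrite mem_leigenspace => /eqP fw.
have gu : g u = th i *: u + w by rewrite addrC subrK.
have fgu : f (g u) = (th i * ga i) *: u + (q ^- 2 * ga i) *: w.
  by rewrite gu linearD linearZZ /= fu fw scalerA.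
have gfu : g (f u) = (th i * ga i) *: u + ga i *: w.
  by rewrite fu linearZZ /= gu scalerDr scalerA [ga i * _]mulrC.
rewrite /qcomm scale_lfunE add_lfunE opp_lfunE !scale_lfunE !comp_lfunE /= fgu gfu.
rewrite [q *: _]scalerDr [q^-1 *: _]scalerDr !scalerA opprD addrACA -!scalerBl.
have -> : q * (q ^- 2 * ga i) - q^-1 * ga i = 0 by field.
by rewrite scale0r addr0 scalerA id_lfunE -(thga i lt_id) -mulrBl mulKf.
Qed.

Lemma qcomm_raise_eigen f g c ga th :
  qcomm f g = c *: \1%VF -> th * ga = c ->
  ((f - ga *: \1%VF) @: leigenspace g th <= leigenspace g (q ^+ 2 * th))%VS.
Proof.
move=> fg thga; apply/subvP => _ /memv_imgP[v gv ->].
move: gv; rewrite shift_lfunE !mem_leigenspace => /eqP gv.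
have E : q *: (th *: f v) - q^-1 *: g (f v) = (q - q^-1) *: (c *: v).
  have /lfunP/(_ v) := fg.
  rewrite /qcomm scale_lfunE add_lfunE opp_lfunE !scale_lfunE !comp_lfunE id_lfunE /=.
  by rewrite gv linearZZ /= => <-; rewrite scalerKV.
have gfv : g (f v) = q *: (q *: (th *: f v) - (q - q^-1) *: (c *: v)).
  by rewrite -E opprB addrC subrK scalerA mulfV // scale1r.
rewrite linearB linearZZ /= gv gfv -thga !scalerBr !scalerA -addrA -opprD -scalerDl.
by apply/eqP; congr (_ *: _ - _ *: _); field.
Qed.

End QCommutator.

Section Inverse.
Variables (K : fieldType) (V : vectType K).
Implicit Types (f : 'End(V)).

Lemma lker0_sum_leigenspace n (U : nat -> {vspace V}) f (c : nat -> K) :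
  (\sum_(i < n) U i)%VS = fullv -> (forall i, (i < n)%N -> c i != 0) ->
  (forall i, (i < n)%N -> (U i <= leigenspace f (c i))%VS) -> lker f == 0%VS.
Proof.
move=> full c0 U_eig; have img : limg f = fullv.
  apply/eqP; rewrite eqEsubv subvf -{1}full; apply/subv_sumP => i _.
  apply/subvP => v /(subvP (U_eig i (ltn_ord i))); rewrite mem_leigenspace => /eqP fv.
  have -> : v = f ((c i)^-1 *: v) by rewrite linearZZ /= fv scalerK ?c0.
  exact: memv_img (memvf _).
have := limg_ker_dim f fullv; rewrite capfv img => /eqP.
by rewrite -{2}[\dim fullv]add0n eqn_add2r dimv_eq0.
Qed.

Lemma leigenspace_lfun_inv f c :
  lker f == 0%VS -> c != 0 -> (leigenspace f c <= leigenspace f^-1 c^-1)%VS.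
Proof.
move=> f_inj c0; apply/subvP => v; rewrite !mem_leigenspace => /eqP fv.
have fv' : f (c^-1 *: v) = v by rewrite linearZZ /= fv scalerK.
by rewrite -{1}fv' lker0_lfunK.
Qed.

End Inverse.

Section SplitDecompositions.
Variables (K : fieldType) (V : vectType K) (q : K) (d : nat).
Variables (A As B Bs KK : 'End(V)) (Vs Vss : nat -> {vspace V}) (a as_ b bs : K).
Hypothesis q_neq0 : q != 0.
Hypothesis q2_neq1 : q ^+ 2 != 1.
Hypothesis trAs_Vs : tridiag_cond As d Vs.
Hypothesis trA_Vss : tridiag_cond A d Vss.

Local Notation e i := (q ^ ((2 * i)%:Z - d%:Z)).
Local Notation UK i := ((\sum_(j < i.+1) Vss j) :&: (\sum_(i <= j < d.+1) Vs j))%VS.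
Local Notation UB i := ((\sum_(j < i.+1) Vss j) :&: (\sum_(j < (d - i).+1) Vs j))%VS.
Local Notation UBs i :=
  ((\sum_(d - i <= j < d.+1) Vss j) :&: (\sum_(i <= j < d.+1) Vs j))%VS.

Hypothesis Vs_eigen : forall i, (i <= d)%N -> Vs i = leigenspace A (a * e i).
Hypothesis Vss_eigen : forall i, (i <= d)%N ->
  Vss i = leigenspace As (as_ * q ^ (d%:Z - (2 * i)%:Z)).
Hypothesis UB_decomposition : decomposition d (fun i => UB i).
Hypothesis UBs_decomposition : decomposition d (fun i => UBs i).
Hypothesis UK_decomposition : decomposition d (fun i => UK i).
Hypothesis B_UB : forall i, (i <= d)%N -> forall v, v \in UB i -> B v = (b * e i) *: v.
Hypothesis Bs_UBs : forall i, (i <= d)%N -> forall v, v \in UBs i ->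
  Bs v = (bs * q ^ (d%:Z - (2 * i)%:Z)) *: v.
Hypothesis KK_UK : forall i, (i <= d)%N -> forall v, v \in UK i -> KK v = e i *: v.

Let e_neq0 i : e i != 0. Proof. exact: expfz_neq0. Qed.

Let eS i : e i.+1 = q ^+ 2 * e i.
Proof. by rewrite exprnP -expfzDr //; congr (q ^ _); lia. Qed.

Let e_opp i : q ^ (d%:Z - (2 * i)%:Z) = (e i)^-1.
Proof. by rewrite invr_expz; congr (q ^ _); lia. Qed.

Let Vss_eigen_e i : (i <= d)%N -> Vss i = leigenspace As (as_ * (e i)^-1).
Proof. by move=> le_id; rewrite Vss_eigen // e_opp. Qed.

Let prefix_homo (W : nat -> {vspace V}) k l : (k <= l)%N ->
  (\sum_(j < k.+1) W j <= \sum_(j < l.+1) W j)%VS.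
Proof. by move=> le_kl; rewrite !sumv_ord_nat; apply: sumv_nat_sub. Qed.

Let suffix_homo (W : nat -> {vspace V}) k l : (k <= l)%N ->
  (\sum_(l <= j < d.+1) W j <= \sum_(k <= j < d.+1) W j)%VS.
Proof. by move=> le_kl; apply: sumv_nat_sub. Qed.

Let UK_direct : directv (\sum_(i < d.+1) UK i). Proof. by case: UK_decomposition. Qed.
Let UK_full : (\sum_(i < d.+1) UK i)%VS = fullv. Proof. by case: UK_decomposition. Qed.

Lemma UK_eigen i : (UK i <= leigenspace KK (e i))%VS.
Proof.
have [le_id | lt_di] := leqP i d; first exact/subv_leigenspace/KK_UK.
by rewrite big_geq // capv0 sub0v.
Qed.

Lemma KK_lker0 : lker KK == 0%VS.
Proof. exact: (lker0_sum_leigenspace UK_full (fun i _ => e_neq0 i) (fun i _ => UK_eigen i)). Qed.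

Lemma UK_eigen_inv i : (UK i <= leigenspace (KK^-1)%VF (e i)^-1)%VS.
Proof. exact: subv_trans (UK_eigen i) (leigenspace_lfun_inv KK_lker0 (e_neq0 i)). Qed.

Lemma A_raise_UK i : (i <= d)%N -> ((A - (a * e i) *: \1%VF) @: UK i <= UK i.+1)%VS.
Proof.
move=> le_id; apply: subv_trans (limg_cap _ _ _) (capvS _ _).
  rewrite limg_shift_sub; last exact: prefix_homo.
  rewrite !sumv_ord_nat; apply: subv_trans (limg_tridiag_sum 0 trA_Vss _) _ => //.
  by apply: sumv_nat_sub => //; lia.
apply: subv_trans (limg_eigen_sum_shift (th := fun j => a * e j) i _) _ => [j|].
  by rewrite mem_index_iota => /andP[_ lt_jd]; rewrite Vs_eigen.
by apply: sumv_sub_seq => j; rewrite !mem_index_iota => le_ij ij; lia.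
Qed.

Lemma qcomm_Kinv_A : qcomm q (KK^-1)%VF A = a *: \1%VF.
Proof.
apply: (qcomm_eq_scalar (U := fun i => UK i) (ga := fun i => (e i)^-1)
          (th := fun i => a * e i) q_neq0 q2_neq1 UK_full) => i le_id.
- exact: UK_eigen_inv.
- by apply: subv_trans (A_raise_UK le_id) _; rewrite -invfM -eS; apply: UK_eigen_inv.
- by rewrite mulfK.
Qed.

Lemma Kinv_raise_Vs j : (j < d)%N ->
  (((KK^-1)%VF - (e j)^-1 *: \1%VF) @: Vs j <= Vs j.+1)%VS.
Proof.
move=> lt_jd; rewrite !Vs_eigen ?(ltnW lt_jd) //.
apply: subv_trans (qcomm_raise_eigen q_neq0 q2_neq1 qcomm_Kinv_A _) _; first exact: mulfK.
by rewrite eS mulrCA.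
Qed.

Lemma Kinv_raise_Vs_prefix k c : (k < d)%N ->
  (((KK^-1)%VF - c *: \1%VF) @: (\sum_(j < k.+1) Vs j) <= \sum_(j < k.+2) Vs j)%VS.
Proof.
move=> lt_kd; rewrite !sumv_ord_nat.
apply: (limg_sum_shift_sub (ga := fun j => (e j)^-1)) => j.
  by rewrite !mem_index_iota => lt_jk; apply: sumv_sup_seq; rewrite // mem_index_iota; lia.
rewrite mem_index_iota => /andP[_ lt_jk].
by apply: subv_trans (Kinv_raise_Vs _) (sumv_sup_seq _ _ _); rewrite ?mem_index_iota; lia.
Qed.

Lemma Kinv_lower_Vss_prefix i : (i <= d)%N ->
  (((KK^-1)%VF - (e i)^-1 *: \1%VF) @: (\sum_(j < i.+1) Vss j) <= \sum_(j < i) Vss j)%VS.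
Proof.
move=> le_id.
apply: subv_trans (limg_flag_lo (P := fun k => (\sum_(j < k.+1) Vss j)%VS)
  (Q := fun k => (\sum_(k <= j < d.+1) Vs j)%VS) (prefix_homo Vss) (suffix_homo Vs)
  UK_direct UK_full (fun j _ => UK_eigen_inv j) le_id) _.
rewrite sumv_ord_nat; apply/subv_sum_seqP => j; rewrite mem_index_iota => /andP[_ lt_ji] _.
by apply: subv_trans (capvSl _ _) _; rewrite !sumv_ord_nat; apply: sumv_nat_sub.
Qed.

Lemma qcomm_B_Kinv : qcomm q B (KK^-1)%VF = b *: \1%VF.
Proof.
have [_ _ UB_full] := UB_decomposition.
apply: (qcomm_eq_scalar (U := fun i => UB i) (ga := fun i => b * e i)
          (th := fun i => (e i)^-1) q_neq0 q2_neq1 UB_full) => i le_id.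
- exact/subv_leigenspace/B_UB.
- case: i le_id => [|i] le_id.
    apply: subv_trans (limgS _ (capvSl _ _)) _.
    by apply: subv_trans (Kinv_lower_Vss_prefix le_id) _; rewrite big_ord0 sub0v.
  apply: subv_trans (limg_cap _ _ _) _.
  have lt_d : (d - i.+1 < d)%N by lia.
  apply: subv_trans (capvS (Kinv_lower_Vss_prefix le_id) (Kinv_raise_Vs_prefix _ lt_d)) _.
  have -> : ((d - i.+1).+2 = (d - i).+1)%N by lia.
  rewrite eS mulrCA mulKf ?expf_neq0 //.
  by apply/subv_leigenspace/B_UB; lia.
- by rewrite mulrCA mulVf ?mulr1.
Qed.

Lemma As_lower_Vss_prefix i : (i <= d)%N ->
  ((As - (as_ * (e i)^-1) *: \1%VF) @: (\sum_(j < i.+1) Vss j) <= \sum_(j < i) Vss j)%VS.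
Proof.
move=> le_id; rewrite !sumv_ord_nat.
apply: subv_trans (limg_eigen_sum_shift (th := fun j => as_ * (e j)^-1) i _) _ => [j|].
  by rewrite mem_index_iota => /andP[_ lt_ji]; rewrite Vss_eigen_e //; lia.
by apply: sumv_sub_seq => j; rewrite !mem_index_iota => lt_ji ij; lia.
Qed.

Lemma As_lower_Vs_suffix i c : (i <= d)%N ->
  ((As - c *: \1%VF) @: (\sum_(i <= j < d.+1) Vs j) <= \sum_(i.-1 <= j < d.+1) Vs j)%VS.
Proof.
move=> le_id; rewrite limg_shift_sub; last by apply: sumv_nat_sub; rewrite ?leq_pred.
apply: subv_trans (limg_tridiag_sum i trAs_Vs (leqnn _)) _.
by apply: sumv_nat_sub => //; lia.
Qed.

Lemma qcomm_K_As : qcomm q KK As = as_ *: \1%VF.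
Proof.
apply: (qcomm_eq_scalar (U := fun i => UK i) (ga := fun i => e i)
          (th := fun i => as_ * (e i)^-1) q_neq0 q2_neq1 UK_full) => i le_id.
- exact: UK_eigen.
- case: i le_id => [|i] le_id.
    apply: subv_trans (limgS _ (capvSl _ _)) _.
    by apply: subv_trans (As_lower_Vss_prefix le_id) _; rewrite big_ord0 sub0v.
  apply: subv_trans (limg_cap _ _ _) _.
  apply: subv_trans (capvS (As_lower_Vss_prefix le_id) (As_lower_Vs_suffix _ le_id)) _.
  by rewrite eS mulKf ?expf_neq0 //; apply: UK_eigen.
- by rewrite mulfVK.
Qed.

Lemma K_lower_Vss j : (j < d)%N -> ((KK - e j.+1 *: \1%VF) @: Vss j.+1 <= Vss j)%VS.
Proof.
move=> lt_jd; rewrite !Vss_eigen_e ?(ltnW lt_jd) //.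
apply: subv_trans (qcomm_raise_eigen q_neq0 q2_neq1 qcomm_K_As _) _; first exact: mulfVK.
by rewrite eS invfM mulrCA mulVKf ?expf_neq0.
Qed.

Lemma K_lower_Vss_suffix k c : (0 < k <= d)%N ->
  ((KK - c *: \1%VF) @: (\sum_(k <= j < d.+1) Vss j) <= \sum_(k.-1 <= j < d.+1) Vss j)%VS.
Proof.
move=> k_range; apply: (limg_sum_shift_sub (ga := fun j => e j)) => j.
  by rewrite !mem_index_iota => kj; apply: sumv_sup_seq; rewrite // mem_index_iota; lia.
rewrite mem_index_iota; case: j => [|j] j_range; first by lia.
by apply: subv_trans (K_lower_Vss _) (sumv_sup_seq _ _ _); rewrite ?mem_index_iota; lia.
Qed.

Lemma K_raise_Vs_suffix i : (i <= d)%N ->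
  ((KK - e i *: \1%VF) @: (\sum_(i <= j < d.+1) Vs j) <= \sum_(i.+1 <= j < d.+1) Vs j)%VS.
Proof.
move=> le_id.
apply: subv_trans (limg_flag_hi (P := fun k => (\sum_(j < k.+1) Vss j)%VS)
  (Q := fun k => (\sum_(k <= j < d.+1) Vs j)%VS) (prefix_homo Vss) (suffix_homo Vs)
  UK_direct UK_full (fun j _ => UK_eigen j) le_id) _.
apply/subv_sum_seqP => j; rewrite mem_index_iota => /andP[lt_ij _] _.
by apply: subv_trans (capvSr _ _) _; apply: sumv_nat_sub.
Qed.

Lemma qcomm_Bs_K : qcomm q Bs KK = bs *: \1%VF.
Proof.
have [_ _ UBs_full] := UBs_decomposition.
have UBs_eigen i : (i <= d)%N -> (UBs i <= leigenspace Bs (bs * (e i)^-1))%VS.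
  by move=> le_id; apply/subv_leigenspace => v; rewrite -e_opp; apply: Bs_UBs.
apply: (qcomm_eq_scalar (U := fun i => UBs i) (ga := fun i => bs * (e i)^-1)
          (th := fun i => e i) q_neq0 q2_neq1 UBs_full) => i le_id.
- exact: UBs_eigen.
- have [lt_id | ge_id] := ltnP i d; last first.
    apply: subv_trans (limgS _ (capvSr _ _)) _.
    by apply: subv_trans (K_raise_Vs_suffix le_id) _; rewrite big_geq ?sub0v.
  apply: subv_trans (limg_cap _ _ _) _.
  have k_range : (0 < d - i <= d)%N by lia.
  apply: subv_trans (capvS (K_lower_Vss_suffix _ k_range) (K_raise_Vs_suffix le_id)) _.
  have -> : ((d - i).-1 = d - i.+1)%N by lia.
  by rewrite mulrCA -invfM -eS; apply: UBs_eigen.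
- by rewrite mulrCA mulfV ?mulr1.
Qed.

End SplitDecompositions.

Unset Implicit Arguments.

Theorem theorem10p1 (K : closedFieldType) (q : K) (V : vectType K)
    (A As : 'End(V)) (d : nat) (Vs Vss : nat -> {vspace V})
    (a as_ b bs : K) (B Bs KK : 'End(V)) :
  q != 0 -> (forall n : nat, (0 < n)%N -> q ^+ n != 1) ->
  tridiagonal_pair A As ->
  standard_ordering A As d Vs ->
  standard_ordering As A d Vss ->
  a != 0 -> as_ != 0 -> b != 0 -> bs != 0 ->
  (forall i, (i <= d)%N -> Vs i = leigenspace A (a * q ^ ((2 * i)%:Z - d%:Z))) ->
  (forall i, (i <= d)%N -> Vss i = leigenspace As (as_ * q ^ (d%:Z - (2 * i)%:Z))) ->
  decomposition d (fun i => (\sum_(j < i.+1) Vss j) :&: (\sum_(j < (d - i).+1) Vs j))%VS ->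
  decomposition d (fun i => (\sum_(d - i <= j < d.+1) Vss j) :&: (\sum_(i <= j < d.+1) Vs j))%VS ->
  decomposition d (fun i => (\sum_(j < i.+1) Vss j) :&: (\sum_(i <= j < d.+1) Vs j))%VS ->
  (forall i, (i <= d)%N -> forall v,
     v \in ((\sum_(j < i.+1) Vss j) :&: (\sum_(j < (d - i).+1) Vs j))%VS ->
     B v = (b * q ^ ((2 * i)%:Z - d%:Z)) *: v) ->
  (forall i, (i <= d)%N -> forall v,
     v \in ((\sum_(d - i <= j < d.+1) Vss j) :&: (\sum_(i <= j < d.+1) Vs j))%VS ->
     Bs v = (bs * q ^ (d%:Z - (2 * i)%:Z)) *: v) ->
  (forall i, (i <= d)%N -> forall v,
     v \in ((\sum_(j < i.+1) Vss j) :&: (\sum_(i <= j < d.+1) Vs j))%VS ->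
     KK v = q ^ ((2 * i)%:Z - d%:Z) *: v) ->
  [/\ (q - q^-1)^-1 *: (q *: ((KK^-1)%VF \o A)%VF - q^-1 *: (A \o (KK^-1)%VF)%VF)
        = a *: \1%VF,
      (q - q^-1)^-1 *: (q *: (B \o (KK^-1)%VF)%VF - q^-1 *: ((KK^-1)%VF \o B)%VF)
        = b *: \1%VF,
      (q - q^-1)^-1 *: (q *: (KK \o As)%VF - q^-1 *: (As \o KK)%VF)
        = as_ *: \1%VF
    & (q - q^-1)^-1 *: (q *: (Bs \o KK)%VF - q^-1 *: (KK \o Bs)%VF)
        = bs *: \1%VF].
Proof.
move=> q_neq0 q_not_root1 _ [_ trAs_Vs] [_ trA_Vss] _ _ _ _ Vs_eigen Vss_eigen.
move=> UB_dec UBs_dec UK_dec B_UB Bs_UBs KK_UK.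
have q2_neq1 : q ^+ 2 != 1 := q_not_root1 2%N isT.
split.
- exact: qcomm_Kinv_A q_neq0 q2_neq1 trA_Vss Vs_eigen UK_dec KK_UK.
- exact: qcomm_B_Kinv q_neq0 q2_neq1 trA_Vss Vs_eigen UB_dec UK_dec B_UB KK_UK.
- exact: qcomm_K_As q_neq0 q2_neq1 trAs_Vs Vss_eigen UK_dec KK_UK.
- exact: qcomm_Bs_K q_neq0 q2_neq1 trAs_Vs Vss_eigen UBs_dec UK_dec Bs_UBs KK_UK.
Qed.
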